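(* Let $m,k\in\mathbb{N}$ and let $\alpha,\beta\in\mathbb{C}$ with $\alpha,\beta,1+\alpha+\beta+k\notin\mathbb{Z}_0^-$. Then \[ {}_3F_2\left[\begin{array}{r} -m,\ \alpha,\ \beta;\\ -m-k,\ 1+\alpha+\beta+k;\end{array}1\right]_m=\frac{\left(1+\alpha+k\right)_m\left(1+\beta+k\right)_m}{\left(1+k\right)_m\left(1+\alpha+\beta+k\right)_m}. \]
   Context: $\mathbb{N}=\{1,2,3,\dots\}$, $\mathbb{Z}_0^-=\{0,-1,-2,\dots\}$. For $a\in\mathbb{C}$ and $n\in\mathbb{N}_0$, $(a)_0=1$ and $(a)_n=a(a+1)\cdots(a+n-1)$. For $N\in\mathbb{N}_0$, ${}_3F_2\left[\begin{array}{r} a_1,a_2,a_3;\\ b_1,b_2;\end{array}z\right]_N=\sum_{n=0}^{N}\frac{(a_1)_n(a_2)_n(a_3)_n}{(b_1)_n(b_2)_n}\frac{z^n}{n!}$ (the sum of the first $N+1$ terms), defined whenever $(b_1)_n(b_2)_n\neq0$ for $0\le n\le N$. *)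

From mathcomp Require Import all_boot all_order all_algebra.
From mathcomp Require Import complex.
From mathcomp Require Import reals.
Set Implicit Arguments. Unset Strict Implicit. Unset Printing Implicit Defensive.
Import Order.TTheory GRing.Theory Num.Theory.
Local Open Scope ring_scope.

Definition poch {F : pzRingType} (a : F) (n : nat) : F :=
  \prod_(i < n) (a + i%:R).

Definition nonpos_int {F : pzRingType} (a : F) : Prop :=
  exists j : nat, a = - j%:R.

Definition F32_trunc {F : fieldType} (a1 a2 a3 b1 b2 z : F) (N : nat) : F :=
  \sum_(n < N.+1)
    (poch a1 n * poch a2 n * poch a3 n) / (poch b1 n * poch b2 n)
      * z ^+ n / (n`!)%:R.

(* The series is balanced, so this is a degenerate case of the Pfaff-Saalschuetz
   sum, proved by a recurrence in m.  Write S_m for the sum, t_m n for its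
   terms, D := 1 + a + b + k and u_m := m + k + 1.  The right-hand side r_m
   satisfies r_0 = 1 = S_0 and r_(m+1) = c_m r_m with
   c_m = (u_m + a)(u_m + b) / (u_m (D + m)), so it suffices that
   S_(m+1) = c_m S_m.  Splitting off the terms of index 0 (both equal to 1),
   S_(m+1) - c_m S_m = 1 - c_m + sum_(n <= m) (t_(m+1) (n+1) - c_m t_m (n+1)),
   and each summand is -(G_m (n+1) - G_m n) / (u_m (D + m)) with
   G_m n := t_m n (a + n)(b + n).  The sum telescopes to -G_m 0 = -ab since
   G_m (m+1) = 0 (the factor (-m)_(m+1) vanishes), and
   1 - c_m + ab / (u_m (D + m)) = 0 because D + m = u_m + a + b. *)

From mathcomp Require Import all_boot all_order all_algebra.
From mathcomp Require Import ring zify.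
From mathcomp Require Import complex.
From mathcomp Require Import reals.
Set Implicit Arguments. Unset Strict Implicit. Unset Printing Implicit Defensive.
Import GRing.Theory Num.Theory.
Local Open Scope ring_scope.

Section Pochhammer.
Variable F : pzRingType.

Lemma poch0 (x : F) : poch x 0 = 1.
Proof. by rewrite /poch big_ord0. Qed.

Lemma pochS (x : F) n : poch x n.+1 = poch x n * (x + n%:R).
Proof. by rewrite /poch big_ord_recr. Qed.

Lemma pochSl (x : F) n : poch x n.+1 = x * poch (x + 1) n.
Proof.
rewrite /poch big_ord_recl /= addr0; congr (_ * _).
by apply: eq_bigr => i _; rewrite /bump /= add1n -nat1r addrA.
Qed.

End Pochhammer.

Section Saalschuetz.
Variables (F : numFieldType) (a b : F) (k : nat).
Hypothesis k_gt0 : (0 < k)%N.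

Let D := 1 + a + b + k%:R.
Hypothesis D_neq0 : forall i : nat, D + i%:R != 0.

Let u m : F := m%:R + k%:R + 1.

Lemma u_neq0 m : u m != 0.
Proof. by rewrite /u -natrD natr1 pnatr_eq0. Qed.

Definition abD_part n := poch a n * poch b n / (poch D n * n`!%:R).
Definition m_part m n := poch (- m%:R : F) n / poch (- m%:R - k%:R : F) n.
Definition saal_term m n := abD_part n * m_part m n.
Definition saal_sum m := \sum_(n < m.+1) saal_term m n.
Definition saal_gosper m n := saal_term m n * ((a + n%:R) * (b + n%:R)).

Let c m := (u m + a) * (u m + b) / (u m * (D + m%:R)).
Let lambda m := - 1 / (u m * (D + m%:R)).

Lemma abD_partS n :
  abD_part n.+1 =
  abD_part n * ((a + n%:R) * (b + n%:R)) / ((D + n%:R) * (n%:R + 1)).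
Proof. by rewrite /abD_part !pochS factS natrM natr1 !invfM; ring. Qed.

Lemma m_partS m n :
  m_part m n.+1 = m_part m n * ((- m%:R + n%:R) / (- m%:R - k%:R + n%:R)).
Proof. by rewrite /m_part !pochS !invfM; ring. Qed.

Lemma m_partSS m n :
  m_part m.+1 n.+1 = m_part m n * (- (m%:R + 1) / (- (m%:R + 1) - k%:R)).
Proof.
rewrite /m_part !pochSl -natr1.
have -> : - (m%:R + 1) + 1 = - m%:R :> F by ring.
have -> : - (m%:R + 1) - k%:R + 1 = - m%:R - k%:R :> F by ring.
by rewrite !invfM; ring.
Qed.

Lemma saal_term0 m : saal_term m 0 = 1.
Proof. by rewrite /saal_term /abD_part /m_part !poch0 !(mulr1, mul1r, invr1). Qed.

Lemma saal_term_last m : saal_term m m.+1 = 0.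
Proof. by rewrite /saal_term /m_part pochS addNr !(mulr0, mul0r). Qed.

Lemma saal_termS_telescope m n : (n <= m)%N ->
  saal_term m.+1 n.+1 - c m * saal_term m n.+1 =
  lambda m * (saal_gosper m n.+1 - saal_gosper m n).
Proof.
move=> le_nm.
have n1_neq0 : (n%:R + 1 : F) != 0 by rewrite natr1 pnatr_eq0.
have mkn_neq0 : (- m%:R - k%:R + n%:R : F) != 0.
  rewrite addrC -opprD -natrD subr_eq0 eqr_nat; apply/negP => /eqP; lia.
have mk1_neq0 : (- (m%:R + 1) - k%:R : F) != 0.
  by rewrite -opprD oppr_eq0 -addrA [1 + _]addrC addrA u_neq0.
have := u_neq0 m; have := D_neq0 m; have := D_neq0 n.
rewrite /saal_gosper /saal_term abD_partS m_partSS m_partS /c /lambda /u /D.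
rewrite -!natr1 => Dn_neq0 Dm_neq0 um_neq0.
by field; rewrite Dn_neq0 Dm_neq0 um_neq0 n1_neq0 mkn_neq0 mk1_neq0.
Qed.

Lemma saal_sumS m : saal_sum m.+1 = c m * saal_sum m.
Proof.
apply/eqP; rewrite -subr_eq0; apply/eqP.
have -> : saal_sum m.+1 = 1 + \sum_(n < m.+1) saal_term m.+1 n.+1.
  by rewrite /saal_sum big_ord_recl saal_term0.
have -> : saal_sum m = 1 + \sum_(n < m.+1) saal_term m n.+1.
  by rewrite /saal_sum big_ord_recl [in RHS]big_ord_recr /= saal_term_last
    addr0 saal_term0.
rewrite mulrDr opprD addrACA mulr_sumr -sumrB.
under eq_bigr => n _ do rewrite saal_termS_telescope 1?(leq_ord n) //.
rewrite -mulr_sumr -(big_mkord xpredT (fun n => _ n.+1 - _ n)) telescope_sumr //.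
rewrite /saal_gosper saal_term_last saal_term0 mul0r mul1r sub0r.
have := u_neq0 m; have := D_neq0 m; rewrite /c /lambda /u /D => ? ?.
by field; apply/andP.
Qed.

Lemma saal_sum_closed m :
  saal_sum m = poch (1 + a + k%:R) m * poch (1 + b + k%:R) m /
               (poch (1 + k%:R) m * poch D m).
Proof.
elim: m => [|m IH].
  by rewrite /saal_sum big_ord1 saal_term0 !poch0 !(mul1r, invr1).
rewrite saal_sumS IH !pochS /c.
have -> : 1 + a + k%:R + m%:R = u m + a by rewrite /u; ring.
have -> : 1 + b + k%:R + m%:R = u m + b by rewrite /u; ring.
have -> : 1 + k%:R + m%:R = u m by rewrite /u; ring.
by rewrite !invfM; ring.
Qed.

End Saalschuetz.

Local Open Scope complex_scope.

Theorem mainTheorem3 (R : realType) (m k : nat) (alpha beta : R[i])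
  (hm : (0 < m)%N) (hk : (0 < k)%N)
  (ha : ~ nonpos_int alpha) (hb : ~ nonpos_int beta)
  (hab : ~ nonpos_int (1 + alpha + beta + k%:R)) :
  F32_trunc (- m%:R) alpha beta (- m%:R - k%:R) (1 + alpha + beta + k%:R) 1 m =
  (poch (1 + alpha + k%:R) m * poch (1 + beta + k%:R) m) /
  (poch (1 + k%:R) m * poch (1 + alpha + beta + k%:R) m).
Proof.
have D_neq0 (i : nat) : 1 + alpha + beta + k%:R + i%:R != 0.
  by rewrite addr_eq0; apply/eqP => D_eq; apply: hab; exists i.
rewrite -(saal_sum_closed hk D_neq0) /F32_trunc; apply: eq_bigr => n _.
rewrite expr1n /saal_term /abD_part /m_part !invfM mulr1; ring.
Qed.
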